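(* Let $A=(a_{ij})_{i,j=1}^n$ be an $n\times n$ matrix all of whose entries are $0$ or $1$, and such that $a_{ij}=1$ whenever $1\le j\le i\le n$. Then $$\det A=\prod_{i=2}^n(1-a_{i-1,i})=\begin{cases}1,& a_{i-1,i}=0 \text{ for all } 2\le i\le n,\\ 0,&\text{otherwise.}\end{cases}$$ *)

From mathcomp Require Import all_boot all_order all_algebra.
Set Implicit Arguments. Unset Strict Implicit. Unset Printing Implicit Defensive.
Import GRing.Theory.
Local Open Scope ring_scope.

(* Entry of an n x n matrix addressed by natural-number indices (0-based):
   natentry A i j = A i j if i < n and j < n, and 0 otherwise. *)
Definition natentry (R : pzRingType) (n : nat) (A : 'M[R]_n) (i j : nat) : R :=
  match insub i, insub j with
  | Some i', Some j' => A i' j'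
  | _, _ => 0
  end.

(* Subtracting from every row the row above it is a unimodular row operation
   (left multiplication by a unipotent lower bidiagonal matrix).  Since two
   consecutive rows of A both equal 1 below the diagonal, the result is upper triangular,
   with diagonal 1, 1 - a_{12}, ..., 1 - a_{n-1,n}. *)

From mathcomp Require Import all_boot all_order all_algebra.
Set Implicit Arguments. Unset Strict Implicit. Unset Printing Implicit Defensive.
Import GRing.Theory.
Local Open Scope ring_scope.

Section NatEntry.

Variables (R : pzRingType) (n : nat) (A : 'M[R]_n).

Lemma natentry_ord (i j : 'I_n) : natentry A i j = A i j.
Proof. by rewrite /natentry !valK. Qed.

Lemma natentry01 :
  (forall i j : 'I_n, A i j = 0 \/ A i j = 1) ->
  forall i j : nat, natentry A i j = 0 \/ natentry A i j = 1.
Proof.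
move=> A01 i j; rewrite /natentry.
by case: insub => [i'|]; [case: insub => [j'|] | ]; auto.
Qed.

End NatEntry.

Lemma natentry_inord (R : pzRingType) (m : nat) (B : 'M[R]_m.+1) (i j : nat) :
  (i <= m)%N -> (j <= m)%N -> natentry B i j = B (inord i) (inord j).
Proof. by move=> im jm; rewrite -natentry_ord !inordK. Qed.

Lemma prod_1_sub01 (R : comNzRingType) (I : Type) (r : seq I) (F : I -> R) :
  (forall i, F i = 0 \/ F i = 1) ->
  \prod_(i <- r) (1 - F i) = (all (fun i => F i == 0) r)%:R.
Proof.
move=> F01; elim: r => [|i r IHr]; first by rewrite big_nil.
rewrite big_cons IHr /=.
by case: (F01 i) => ->; rewrite ?eqxx ?subr0 ?mul1r ?subrr ?mul0r ?oner_eq0.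
Qed.

Section RowDifference.

Variables (R : comNzRingType) (m : nat).

Definition subdiag_mx : 'M[R]_m.+1 := \matrix_(i, j) ((j.+1 == i :> nat)%:R).

Lemma det_1_sub_subdiag_mx : \det (1%:M - subdiag_mx) = 1.
Proof.
have subdiag_ltF (i j : 'I_m.+1) : (i <= j)%N -> (j.+1 == i :> nat) = false.
  by move=> ij; apply: gtn_eqF; rewrite ltnS.
rewrite det_trig.
  by apply: big1 => i _; rewrite !mxE eqxx subdiag_ltF ?subr0.
apply/is_trig_mxP => i j ij; rewrite !mxE subdiag_ltF ?(ltnW ij) //.
by rewrite (_ : i == j = false) ?subr0 // -val_eqE ltn_eqF.
Qed.

Lemma mul_1_sub_subdiag_mxE (A : 'M[R]_m.+1) i j :
  ((1%:M - subdiag_mx) *m A) i j =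
    A i j - (if (0 < i)%N then A (inord i.-1) j else 0).
Proof.
rewrite mulmxBl mul1mx !mxE; congr (_ - _).
under eq_bigr => k _ do rewrite mxE mulr_natl mulrb.
rewrite -big_mkcond /=; case: (posnP i) => [i0 | i_gt0].
  by rewrite big_pred0 // => k; rewrite i0.
rewrite (big_pred1 (inord i.-1)) // => k /=.
apply/eqP/eqP => [<- | ->]; first by apply: val_inj; rewrite /= inordK.
by rewrite inordK ?prednK // ltnW.
Qed.

Lemma det_mul_1_sub_subdiag_mx (A : 'M[R]_m.+1) :
  \det ((1%:M - subdiag_mx) *m A) = \det A.
Proof. by rewrite det_mulmx det_1_sub_subdiag_mx mul1r. Qed.

End RowDifference.

Section LowerOnes.

Variables (R : comNzRingType) (m : nat) (A : 'M[R]_m.+1).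
Hypothesis A_lower1 : forall i j : 'I_m.+1, (j <= i)%N -> A i j = 1.

Lemma upper_mul_1_sub_subdiag_mx :
  is_trig_mx ((1%:M - subdiag_mx R m) *m A)^T.
Proof.
apply/is_trig_mxP => i j ij; rewrite mxE mul_1_sub_subdiag_mxE.
have j_gt0 : (0 < j)%N by apply: leq_ltn_trans ij.
have jm : (j.-1 <= m)%N by rewrite (leq_trans (leq_pred j)) // -ltnS.
by rewrite j_gt0 !A_lower1 ?subrr ?(ltnW ij) // inordK // -ltnS prednK.
Qed.

Lemma det_lower1 : \det A = \prod_(k < m) (1 - A (inord k) (inord k.+1)).
Proof.
rewrite -det_mul_1_sub_subdiag_mx -det_tr det_trig ?upper_mul_1_sub_subdiag_mx //.
rewrite big_ord_recl mxE mul_1_sub_subdiag_mxE A_lower1 // subr0 mul1r.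
apply: eq_bigr => k _; rewrite mxE mul_1_sub_subdiag_mxE A_lower1 //=.
by congr (1 - A _ _); apply: val_inj; rewrite /= inordK // ltnS.
Qed.

End LowerOnes.

Lemma det_lower1_natentry (R : comNzRingType) (n : nat) (A : 'M[R]_n) :
  (forall i j : 'I_n, (j <= i)%N -> A i j = 1) ->
  \det A = \prod_(0 <= k < n.-1) (1 - natentry A k k.+1).
Proof.
case: n A => [|m] A A_lower1; first by rewrite det_mx00 big_geq.
rewrite det_lower1 // big_mkord; apply: eq_bigr => k _.
by rewrite natentry_inord // ltnW.
Qed.

Lemma superdiag_eq0E (R : pzRingType) (n : nat) (A : 'M[R]_n) :
  [forall i : 'I_n, forall j : 'I_n, ((i : nat).+1 == j) ==> (A i j == 0)] =
  all (fun k => natentry A k k.+1 == 0) (index_iota 0 n.-1).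
Proof.
apply/forallP/allP => [superdiag0 k | superdiag0 i].
  rewrite mem_index_iota => /= kn; have kn1 : (k.+1 < n)%N by rewrite -ltn_predRL.
  have /forallP/(_ (Ordinal kn1)) := superdiag0 (Ordinal (ltnW kn1)).
  by rewrite eqxx -natentry_ord; apply.
apply/forallP => j; apply/implyP => /eqP ij.
have := superdiag0 i; rewrite mem_index_iota ltn_predRL ij ltn_ord.
by rewrite -natentry_ord; apply.
Qed.

Theorem lemma3p1 (R : comNzRingType) (n : nat) (A : 'M[R]_n)
  (H01 : forall i j : 'I_n, A i j = 0 \/ A i j = 1)
  (Hlow : forall i j : 'I_n, (j <= i)%N -> A i j = 1) :
  \det A = \prod_(0 <= k < n.-1) (1 - natentry A k k.+1)
  /\ \det A = (if [forall i : 'I_n, forall j : 'I_n,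
                    ((i : nat).+1 == j) ==> (A i j == 0)]
               then 1 else 0).
Proof.
have detA := det_lower1_natentry Hlow.
split=> //; rewrite detA superdiag_eq0E.
rewrite (prod_1_sub01 _ (fun k => natentry01 H01 k k.+1)).
by case: all.
Qed.
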